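(* Let $A,B,D>0$ be constants, let $\lambda\in\mathbb{R}$, and let $f:(0,\infty)\to\mathbb{R}$ be defined by $$f(X)=A(2DX)^{-1/2}-B(2DX)^{-3/2}.$$ Let $\alpha>0$, $\beta>0$, and let $g:(0,\infty)\to(-\infty,0]$ be given by $g(X)=-\beta X^{\alpha}$. Let $V_\lambda:(0,\infty)\to\mathbb{R}$ be a potential satisfying $-V_\lambda'(X)=\lambda-f(X)+g(X)$ for all $X>0$ (i.e. $V_\lambda$ is an antiderivative of $-(\lambda-f+g)$, determined up to an additive constant). Then $V_\lambda$ is confining, that is, $$\lim_{X\to0^+}V_\lambda(X)=\lim_{X\to\infty}V_\lambda(X)=+\infty,$$ and for every $\xi>0$, $$\int_0^\infty e^{-\xi V_\lambda(X)}\,dX<\infty.$$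
   Context: This potential governs the stochastic droplet growth model $\dot X=\lambda-f(X)+g(X)+\sigma(X)\dot W_t$, where $X=r^2/(2D)$ is the scaled squared droplet radius, $f$ is the Köhler curve, $g$ a sink term, and $W_t$ a Brownian motion. *)

From Stdlib Require Import Reals.
From Coquelicot Require Import Coquelicot.
Open Scope R_scope.

Definition kohler (A B D X : R) : R :=
  A * Rpower (2 * D * X) (-(1/2)) - B * Rpower (2 * D * X) (-(3/2)).

Definition sink (alpha beta X : R) : R := - beta * Rpower X alpha.

(* V_lambda is determined up to a constant, and an explicit antiderivative is
     W(X) = - lambda X + (A/D) (2DX)^(1/2) + (B/D) (2DX)^(-1/2) + beta/(alpha+1) X^(alpha+1),
   all of whose terms except the first are nonnegative.  Near 0 the term (2DX)^(-1/2)
   blows up, while for large X the superlinear sink term dominates, so V_lambda(X) >= X - K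
   for some K.  This linear lower bound makes exp(- xi V_lambda) dominated by a multiple
   of exp(- xi X), and the improper integral of a nonnegative function converges as soon
   as its partial integrals are bounded. *)
From Stdlib Require Import Reals Lra Classical.
From Coquelicot Require Import Coquelicot.
Open Scope R_scope.

Lemma Rpower_pos (x y : R) : 0 < Rpower x y.
Proof. apply exp_pos. Qed.

Lemma exp_le_compat (x y : R) : x <= y -> exp x <= exp y.
Proof. intros [hxy | ->]; [left; now apply exp_increasing | apply Rle_refl]. Qed.

Lemma filterlim_affine_p_infty (a b : R) :
  0 < b -> filterlim (fun u => a + b * u) (Rbar_locally p_infty) (Rbar_locally p_infty).
Proof.
  intros hb P [M hP]. exists ((M - a) / b). intros u hu. apply hP.
  apply (Rmult_lt_compat_l b) in hu; [|exact hb].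
  replace (b * ((M - a) / b)) with (M - a) in hu by (field; lra).
  lra.
Qed.

Lemma filterlim_scal_at_right0 (c : R) :
  0 < c -> filterlim (fun X => c * X) (at_right 0) (at_right 0).
Proof.
  intros hc P [eps hP].
  assert (heps : 0 < eps / c) by (apply Rdiv_lt_0_compat; [apply cond_pos | exact hc]).
  exists (mkposreal _ heps). intros X hX hX0. apply hP; [|nra].
  change (Rabs (c * X - 0) < eps). change (Rabs (X - 0) < eps / c) in hX.
  rewrite !Rminus_0_r, Rabs_mult, (Rabs_pos_eq c) in * by lra.
  apply (Rmult_lt_compat_l c) in hX; [|exact hc].
  replace (c * (eps / c)) with (pos eps) in hX by (field; lra).
  exact hX.
Qed.

Lemma filterlim_Rpower_neg_at_right0 (c p : R) :
  0 < c -> p < 0 -> filterlim (fun X => Rpower (c * X) p) (at_right 0) (Rbar_locally p_infty).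
Proof.
  intros hc hp.
  apply (filterlim_comp _ _ _ (fun X => c * X) (fun y => exp (p * ln y)) _ (at_right 0)).
  { now apply filterlim_scal_at_right0. }
  apply (filterlim_comp _ _ _ ln (fun t => exp (p * t)) _ (Rbar_locally m_infty)).
  { exact is_lim_ln_0. }
  apply (is_lim_comp exp (fun t => p * t) m_infty p_infty p_infty).
  - exact is_lim_exp_p.
  - replace p_infty with (Rbar_mult p m_infty).
    + apply is_lim_scal_l, is_lim_id.
    + simpl. destruct (Rle_dec 0 p); [exfalso; lra | reflexivity].
  - exists 0. intros t _. discriminate.
Qed.

Lemma is_derive_Rpower (p X : R) :
  0 < X -> is_derive (fun t => Rpower t p) X (p * Rpower X (p - 1)).
Proof. intros hX. apply is_derive_Reals, derivable_pt_lim_power, hX. Qed.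

Lemma is_derive_Rpower_scal (c p X : R) :
  0 < c * X -> is_derive (fun t => Rpower (c * t) p) X (c * (p * Rpower (c * X) (p - 1))).
Proof.
  intros hcX.
  apply (is_derive_comp (fun t => Rpower t p) (fun t => c * t)).
  - now apply is_derive_Rpower.
  - auto_derive; [easy | ring].
Qed.

Lemma is_derive_same_translate (V W h : R -> R) :
  (forall X, 0 < X -> is_derive V X (h X)) ->
  (forall X, 0 < X -> is_derive W X (h X)) ->
  exists C, forall X, 0 < X -> V X = W X + C.
Proof.
  intros hV hW. exists (V 1 - W 1). intros X hX.
  assert (hd : forall t, 0 < t -> is_derive (fun t => V t - W t) t zero).
  { intros t ht.
    pose proof (is_derive_minus V W t _ _ (hV t ht) (hW t ht)) as hVW.
    now rewrite minus_eq_zero in hVW. }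
  destruct (Rtotal_order X 1) as [h1 | [h1 | h1]].
  - enough (V X - W X = V 1 - W 1) by lra.
    apply (eq_is_derive (fun t => V t - W t)); [intros t ht; apply hd|]; lra.
  - subst; ring.
  - enough (V 1 - W 1 = V X - W X) by lra.
    apply (eq_is_derive (fun t => V t - W t)); [intros t ht; apply hd|]; lra.
Qed.

Lemma Rpower_dominates_linear (alpha q m : R) :
  0 < alpha -> 0 < q ->
  exists K, forall X, 0 < X -> m * X <= q * Rpower X (alpha + 1) + K.
Proof.
  intros halpha hq.
  set (T := Rpower ((Rabs m + 1) / q) (/ alpha)).
  assert (hm := Rle_abs m).
  assert (hm0 := Rabs_pos m).
  exists (Rabs m * T). intros X hX.
  rewrite Rpower_plus, Rpower_1 by exact hX.
  assert (hXa := Rpower_pos X alpha).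
  destruct (Rle_or_lt T X) as [hTX | hXT].
  - assert (hTa : (Rabs m + 1) / q <= Rpower X alpha).
    { replace ((Rabs m + 1) / q) with (Rpower T alpha).
      - apply Rle_Rpower_l; [lra | split; [apply Rpower_pos | exact hTX]].
      - unfold T. rewrite Rpower_mult, Rinv_l, Rpower_1; [reflexivity | | lra].
        apply Rdiv_lt_0_compat; lra. }
    assert (Rabs m + 1 <= q * Rpower X alpha).
    { apply (Rmult_le_compat_l q) in hTa; [|lra].
      replace (q * ((Rabs m + 1) / q)) with (Rabs m + 1) in hTa by (field; lra).
      exact hTa. }
    assert (0 <= T) by (left; apply Rpower_pos).
    assert ((Rabs m + 1) * X <= q * Rpower X alpha * X) by (apply Rmult_le_compat_r; lra).
    nra.
  - assert (0 <= q * (Rpower X alpha * X)) by (apply Rmult_le_pos; nra).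
    nra.
Qed.

Lemma at_right_between (l u : R) : l < u -> at_right l (fun a => l < a < u).
Proof.
  intros hlu. assert (hul : 0 < u - l) by lra.
  exists (mkposreal _ hul). intros a ha hla. split; [exact hla |].
  change (Rabs (a - l) < u - l) in ha.
  apply Rabs_lt_between' in ha. lra.
Qed.

Lemma RInt_subinterval_le (f : R -> R) (a a' b' b : R) :
  a <= a' <= b' -> b' <= b -> (forall x, a <= x <= b -> 0 <= f x) -> ex_RInt f a b ->
  RInt f a' b' <= RInt f a b.
Proof.
  intros ha hb hf hab.
  assert (hab' : ex_RInt f a b')
    by (apply (ex_RInt_Chasles_1 (V := R_CompleteNormedModule) _ _ _ b); [lra | exact hab]).
  assert (ha' : ex_RInt f a a')
    by (apply (ex_RInt_Chasles_1 (V := R_CompleteNormedModule) _ _ _ b'); [lra | exact hab']).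
  assert (ha'b' : ex_RInt f a' b')
    by (apply (ex_RInt_Chasles_2 (V := R_CompleteNormedModule) _ a); [lra | exact hab']).
  assert (hb' : ex_RInt f b' b)
    by (apply (ex_RInt_Chasles_2 (V := R_CompleteNormedModule) _ a); [lra | exact hab]).
  rewrite <- (RInt_Chasles f a b' b), <- (RInt_Chasles f a a' b') by assumption.
  assert (0 <= RInt f a a') by (apply RInt_ge_0; [lra | exact ha' | intros; apply hf; lra]).
  assert (0 <= RInt f b' b) by (apply RInt_ge_0; [lra | exact hb' | intros; apply hf; lra]).
  change plus with Rplus. lra.
Qed.

Lemma ex_RInt_gen_nonneg_bounded (f : R -> R) (l M : R) :
  (forall x, l < x -> 0 <= f x) ->
  (forall a b, l < a -> a <= b -> ex_RInt f a b) ->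
  (forall a b, l < a -> a <= b -> RInt f a b <= M) ->
  ex_RInt_gen f (at_right l) (Rbar_locally p_infty).
Proof.
  intros hf hex hM.
  (* The integral is the supremum L of the partial integrals, which nonnegativity
     makes increase towards L as [a, b] grows. *)
  set (E := fun y => exists a b, l < a <= b /\ y = RInt f a b).
  destruct (completeness E) as [L [hLub hLleast]].
  { exists M. intros y (a & b & hab & ->). apply hM; lra. }
  { exists (RInt f (l + 1) (l + 1)), (l + 1), (l + 1). split; [lra | reflexivity]. }
  exists L. intros P [eps hP].
  assert (hclose : exists a0 b0, l < a0 <= b0 /\ L - eps < RInt f a0 b0).
  { apply NNPP. intros hfar.
    enough (L <= L - eps) by (pose proof (cond_pos eps); lra).
    apply hLleast. intros y (a & b & hab & ->).
    apply Rnot_lt_le. intros hlt. apply hfar. now exists a, b. }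
  destruct hclose as (a0 & b0 & hab0 & hlt).
  apply (Filter_prod _ _ _ (fun a => l < a < a0) (fun b => b0 < b)).
  - now apply at_right_between.
  - now exists b0.
  - intros a b ha hb. exists (RInt f a b). split.
    + apply (RInt_correct (V := R_CompleteNormedModule)), hex; lra.
    + apply hP. change (Rabs (RInt f a b - L) < eps). apply Rabs_lt_between'.
      assert (RInt f a0 b0 <= RInt f a b).
      { apply RInt_subinterval_le; [lra | lra | intros; apply hf; lra | apply hex; lra]. }
      assert (RInt f a b <= L) by (apply hLub; exists a, b; split; [lra | reflexivity]).
      lra.
Qed.

Lemma is_RInt_exp_lin (xi a b : R) :
  xi <> 0 ->
  is_RInt (fun x => exp (- xi * x)) a b ((exp (- xi * a) - exp (- xi * b)) / xi).
Proof.
  intros hxi.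
  replace ((exp (- xi * a) - exp (- xi * b)) / xi) with
    (minus (- exp (- xi * b) / xi) (- exp (- xi * a) / xi))
    by (unfold minus, plus, opp; simpl; field; exact hxi).
  apply (is_RInt_derive (V := R_CompleteNormedModule) (fun x => - exp (- xi * x) / xi)).
  - intros x _. auto_derive; [easy | field; exact hxi].
  - intros x _. apply (ex_derive_continuous (K := R_AbsRing) (V := R_NormedModule)).
    auto_derive. easy.
Qed.

Lemma ex_RInt_gen_exp_neg_of_ge_linear (V : R -> R) (K xi : R) :
  0 < xi ->
  (forall X, 0 < X -> continuous V X) ->
  (forall X, 0 < X -> X - K <= V X) ->
  ex_RInt_gen (fun X => exp (- xi * V X)) (at_right 0) (Rbar_locally p_infty).
Proof.
  intros hxi hV hVK.
  set (M := exp (xi * K)).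
  assert (hexp : forall a b, 0 < a -> a <= b -> ex_RInt (fun X => exp (- xi * V X)) a b).
  { intros a b ha hab. apply (ex_RInt_continuous (V := R_CompleteNormedModule)).
    intros z hz. rewrite Rmin_left, Rmax_right in hz by exact hab.
    apply (continuous_comp V (fun v => exp (- xi * v))); [apply hV; lra |].
    apply (ex_derive_continuous (K := R_AbsRing) (V := R_NormedModule)). auto_derive. easy. }
  apply (ex_RInt_gen_nonneg_bounded _ 0 (M / xi)).
  - intros X _. left. apply exp_pos.
  - exact hexp.
  - intros a b ha hab.
    assert (hlin := is_RInt_scal _ _ _ M _ (is_RInt_exp_lin xi a b ltac:(lra))).
    apply Rle_trans with (RInt (fun x => M * exp (- xi * x)) a b).
    + apply RInt_le; [exact hab | apply hexp; lra | eexists; exact hlin |].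
      intros x hx. unfold M. rewrite <- exp_plus.
      apply exp_le_compat. specialize (hVK x ltac:(lra)). nra.
    + replace (RInt (fun x => M * exp (- xi * x)) a b)
        with (M * ((exp (- xi * a) - exp (- xi * b)) / xi))
        by (symmetry; exact (is_RInt_unique _ _ _ _ hlin)).
      assert (exp (- xi * a) <= 1) by (rewrite <- exp_0; apply exp_le_compat; nra).
      assert (0 < exp (- xi * b)) by apply exp_pos.
      assert (0 < M) by apply exp_pos.
      assert (0 < / xi) by (apply Rinv_0_lt_compat; exact hxi).
      unfold Rdiv. apply Rmult_le_compat_l; [lra | nra].
Qed.

Definition potential (A B D lam alpha beta X : R) : R :=
  - lam * X + A / D * Rpower (2 * D * X) (1/2) + B / D * Rpower (2 * D * X) (-(1/2))
  + beta / (alpha + 1) * Rpower X (alpha + 1).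

Lemma is_derive_potential (A B D lam alpha beta X : R) :
  0 < D -> alpha + 1 <> 0 -> 0 < X ->
  is_derive (potential A B D lam alpha beta) X
    (- (lam - kohler A B D X + sink alpha beta X)).
Proof.
  intros hD halpha hX.
  assert (hDX : 0 < 2 * D * X) by (apply Rmult_lt_0_compat; lra).
  replace (- (lam - kohler A B D X + sink alpha beta X)) with
    (-lam + A / D * (2 * D * (1/2 * Rpower (2 * D * X) (1/2 - 1)))
     + B / D * (2 * D * (-(1/2) * Rpower (2 * D * X) (-(1/2) - 1)))
     + beta / (alpha + 1) * ((alpha + 1) * Rpower X (alpha + 1 - 1))).
  - unfold potential.
    apply @is_derive_plus; [apply @is_derive_plus; [apply @is_derive_plus|] |].
    + auto_derive; [easy | ring].
    + apply @is_derive_scal, is_derive_Rpower_scal, hDX.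
    + apply @is_derive_scal, is_derive_Rpower_scal, hDX.
    + apply @is_derive_scal, is_derive_Rpower, hX.
  - unfold kohler, sink.
    replace (1/2 - 1) with (-(1/2)) by field.
    replace (-(1/2) - 1) with (-(3/2)) by field.
    replace (alpha + 1 - 1) with alpha by ring.
    field; lra.
Qed.

Lemma potential_ge_near0 (A B D lam alpha beta X : R) :
  0 < A -> 0 < D -> 0 < alpha -> 0 < beta -> 0 < X <= 1 ->
  - Rabs lam + B / D * Rpower (2 * D * X) (-(1/2)) <= potential A B D lam alpha beta X.
Proof.
  intros hA hD halpha hbeta hX.
  assert (hlam : - Rabs lam <= - lam * X).
  { assert (Rabs (lam * X) <= Rabs lam).
    { rewrite Rabs_mult, (Rabs_pos_eq X) by lra.
      pose proof (Rabs_pos lam). nra. }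
    pose proof (Rle_abs (lam * X)). lra. }
  assert (0 <= A / D * Rpower (2 * D * X) (1/2)).
  { apply Rmult_le_pos; [apply Rlt_le, Rdiv_lt_0_compat | apply Rlt_le, Rpower_pos]; lra. }
  assert (0 <= beta / (alpha + 1) * Rpower X (alpha + 1)).
  { apply Rmult_le_pos; [apply Rlt_le, Rdiv_lt_0_compat | apply Rlt_le, Rpower_pos]; lra. }
  unfold potential. lra.
Qed.

Lemma potential_ge_linear (A B D lam alpha beta : R) :
  0 < A -> 0 < B -> 0 < D -> 0 < alpha -> 0 < beta ->
  exists K, forall X, 0 < X -> X - K <= potential A B D lam alpha beta X.
Proof.
  intros hA hB hD halpha hbeta.
  destruct (Rpower_dominates_linear alpha (beta / (alpha + 1)) (lam + 1)) as [K hK];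
    [exact halpha | apply Rdiv_lt_0_compat; lra |].
  exists K. intros X hX.
  specialize (hK X hX).
  assert (0 <= A / D * Rpower (2 * D * X) (1/2)).
  { apply Rmult_le_pos; [apply Rlt_le, Rdiv_lt_0_compat | apply Rlt_le, Rpower_pos]; lra. }
  assert (0 <= B / D * Rpower (2 * D * X) (-(1/2))).
  { apply Rmult_le_pos; [apply Rlt_le, Rdiv_lt_0_compat | apply Rlt_le, Rpower_pos]; lra. }
  unfold potential. lra.
Qed.

Theorem proposition2 (A B D lam alpha beta : R) (V : R -> R)
  (hA : 0 < A) (hB : 0 < B) (hD : 0 < D)
  (halpha : 0 < alpha) (hbeta : 0 < beta)
  (hV : forall X : R, 0 < X ->
        is_derive V X (- (lam - kohler A B D X + sink alpha beta X))) :
  filterlim V (at_right 0) (Rbar_locally p_infty) /\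
  filterlim V (Rbar_locally p_infty) (Rbar_locally p_infty) /\
  (forall xi : R, 0 < xi ->
     ex_RInt_gen (fun X => exp (- xi * V X)) (at_right 0) (Rbar_locally p_infty)).
Proof.
  destruct (is_derive_same_translate V (potential A B D lam alpha beta) _ hV) as [C hVW].
  { intros X hX. apply is_derive_potential; lra. }
  destruct (potential_ge_linear A B D lam alpha beta hA hB hD halpha hbeta) as [K hK].
  assert (hVK : forall X, 0 < X -> X - (K - C) <= V X).
  { intros X hX. rewrite hVW by exact hX. specialize (hK X hX). lra. }
  split; [| split].
  - apply (filterlim_ge_p_infty (fun X => (C - Rabs lam) + B / D * Rpower (2 * D * X) (-(1/2)))).
    + apply (filter_imp (fun X => 0 < X < 1)); [| apply at_right_between; lra].
      intros X hX. rewrite hVW by lra.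
      pose proof (potential_ge_near0 A B D lam alpha beta X hA hD halpha hbeta ltac:(lra)).
      lra.
    + apply (filterlim_comp _ _ _ (fun X => Rpower (2 * D * X) (-(1/2)))
               (fun u => (C - Rabs lam) + B / D * u) _ (Rbar_locally p_infty)).
      * apply filterlim_Rpower_neg_at_right0; lra.
      * apply filterlim_affine_p_infty, Rdiv_lt_0_compat; lra.
  - apply (filterlim_ge_p_infty (fun X => - (K - C) + 1 * X)).
    + exists 0. intros X hX. specialize (hVK X hX). lra.
    + apply filterlim_affine_p_infty; lra.
  - intros xi hxi. apply (ex_RInt_gen_exp_neg_of_ge_linear V (K - C) xi hxi); [| exact hVK].
    intros X hX. apply (ex_derive_continuous (K := R_AbsRing) (V := R_NormedModule)).
    eexists. exact (hV X hX).
Qed.
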